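(* Let $\Lambda\ge2$ be an integer, let $q\in\mathbb C$ satisfy $|q-1|>1$, and set $t_0=1/(1-q)$, $\rho=|t_0|$. Suppose real numbers $r_1,\dots,r_{\Lambda-1}$ satisfy $\rho^2\le r_1\le r_2\le\cdots\le r_{\Lambda-1}\le\rho$ and, for $2\le s\le\Lambda-1$, $$r_s\ \ge\ \max\{|t_e\|_q t_f| : t_e\in D(r_k),\ t_f\in D(r_\ell),\ k,\ell\ge1,\ k+\ell=s\}.$$ Define $S_i=\{t_0\}\cup D(r_i)$ for $1\le i\le\Lambda-1$. Then $S_1\subseteq\cdots\subseteq S_{\Lambda-1}$ and: (1) $\{t t': t\in S_k,\ t'\in S_\ell\}\subseteq S_{\min(k,\ell)}$ for all $k,\ell\in\{1,\dots,\Lambda-1\}$; (2) for $k,\ell\ge1$ with $k+\ell\le\Lambda-1$ and all $t\in S_k$, $t'\in S_\ell$: $1+(q-1)tt'\ne0$ and $t\|_q t'\in S_{k+\ell}$; (3') $1\notin S_{\Lambda-1}$; (4) for $k,\ell\ge1$ with $k+\ell=\Lambda$ and all $t\in S_k$, $t'\in S_\ell$: $1+(q-1)tt'\ne0$.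
   Context: $D(r)=\{t\in\mathbb C:|t|\le r\}$. For $t,t'\in\mathbb C$ with $1+(q-1)tt'\ne0$, the parallel connection of transmissivities is $t\|_q t'=\dfrac{t+t'+(q-2)tt'}{1+(q-1)tt'}$ (this is always defined for $t,t'\in D(\rho)$ since $|q-1||tt'|\le\rho<1$). *)

(* Complex numbers are rendered as an arbitrary
   numClosedFieldType C (of which the complex numbers are the model). *)
From HB Require Import structures.
From mathcomp Require Import all_boot all_order all_algebra.
Set Implicit Arguments. Unset Strict Implicit. Unset Printing Implicit Defensive.
Import Order.TTheory GRing.Theory Num.Theory.
Local Open Scope ring_scope.

Definition inD (C : numClosedFieldType) (r t : C) : bool := `|t| <= r.

Definition par (C : numClosedFieldType) (q t t' : C) : C :=
  (t + t' + (q - 2) * t * t') / (1 + (q - 1) * t * t').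

Definition t0 (C : numClosedFieldType) (q : C) : C := 1 / (1 - q).

Definition inS (C : numClosedFieldType) (q : C) (r : nat -> C) (i : nat) (t : C) : bool :=
  (t == t0 q) || inD (r i) t.

From HB Require Import structures.
From mathcomp Require Import all_boot all_order all_algebra.
From mathcomp Require Import ring zify.
Import Order.TTheory GRing.Theory Num.Theory.
Local Open Scope ring_scope.

(* Proof of Proposition 5.2.  Put rho = |t0| = 1/|q-1| < 1.  The whole
   argument rests on the observation that every set S_i = {t0} u D(r_i)
   lies in the closed disc D(rho), because |t0| = rho and r_i <= rho:
   - for |t|, |t'| <= rho we get |(q-1) t t'| <= |q-1| rho^2 = rho < 1, so
     the denominator 1 + (q-1) t t' of t ||_q t' never vanishes (items 2, 4);
   - products satisfy |t t'| <= rho^2 <= r_1 <= r_min(k,l) (item 1);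
   - t0 is absorbing for ||_q: t0 ||_q t = t0 whenever t <> 1, so item 2
     reduces, off {t0}, to the hypothesis bounding |t_e ||_q t_f| on discs;
   - 1 is not in D(rho), hence not in S_(Lam-1) (item 3'). *)

Lemma add1_neq0 (C : numClosedFieldType) (x : C) : `|x| < 1 -> 1 + x != 0.
Proof.
move=> x_lt1; apply/eqP=> x_eq.
have x_m1 : x = -1 by rewrite -(subr0 x) -x_eq; ring.
by move: x_lt1; rewrite x_m1 normrN normr1 ltxx.
Qed.

Lemma par_t0l {C : numClosedFieldType} {q t : C} :
  1 - q != 0 -> 1 - t != 0 -> par q (t0 q) t = t0 q.
Proof.
move=> q_neq1 t_neq1; rewrite /par /t0.
have -> : 1 + (q - 1) * (1 / (1 - q)) * t = 1 - t by field.
have -> : 1 / (1 - q) + t + (q - 2) * (1 / (1 - q)) * t = 1 / (1 - q) * (1 - t)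
  by field.
by rewrite mulfK.
Qed.

(* ||_q is commutative, so t0 is absorbing on the right as well. *)
Lemma par_t0r {C : numClosedFieldType} {q t : C} :
  1 - q != 0 -> 1 - t != 0 -> par q t (t0 q) = t0 q.
Proof.
move=> q_neq1 t_neq1; rewrite -[RHS](par_t0l q_neq1 t_neq1) /par.
by congr (_ / _); ring.
Qed.

Section FixedQ.
Context {C : numClosedFieldType} {q : C}.
Hypothesis hq : 1 < `|q - 1|.
Local Notation rho := `|t0 q|.

Lemma subq_neq0 : 1 - q != 0.
Proof. by rewrite -normr_gt0 distrC (lt_trans _ hq). Qed.

Lemma norm_t0 : rho = `|q - 1|^-1.
Proof. by rewrite /t0 div1r normfV distrC. Qed.

Lemma mul_norm_t0 : `|q - 1| * rho = 1.
Proof. by rewrite norm_t0 mulfV // gt_eqF // (lt_trans _ hq). Qed.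

Lemma norm_t0_lt1 : rho < 1.
Proof. by rewrite norm_t0 invf_lt1 // (lt_trans _ hq). Qed.

Lemma sub1_neq0 {t : C} : `|t| <= rho -> 1 - t != 0.
Proof.
by move=> t_le; rewrite add1_neq0 // normrN (le_lt_trans t_le norm_t0_lt1).
Qed.

Lemma par_den_neq0 {t t' : C} :
  `|t| <= rho -> `|t'| <= rho -> 1 + (q - 1) * t * t' != 0.
Proof.
move=> t_le t'_le; apply: add1_neq0; apply: le_lt_trans norm_t0_lt1.
rewrite (le_trans (y := `|q - 1| * (rho * rho))) //.
- by rewrite -mulrA normrM (normrM t); apply: ler_wpM2l => //; apply: ler_pM.
- by rewrite mulrA mul_norm_t0 mul1r.
Qed.

Lemma inS_norm_le {r : nat -> C} {i : nat} {t : C} :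
  r i <= rho -> inS q r i t -> `|t| <= rho.
Proof. by move=> ri_le /orP [/eqP -> // | t_in]; apply: le_trans ri_le. Qed.

End FixedQ.

Section Radii.
Context {C : numClosedFieldType} {Lam : nat} {r : nat -> C} {lo hi : C}.
Hypothesis hr1 : lo <= r 1%N.
Hypothesis hrmono : forall i : nat, (1 <= i)%N -> (i.+1 <= Lam - 1)%N -> r i <= r i.+1.
Hypothesis hrlast : r (Lam - 1)%N <= hi.

Lemma radii_mono {i j : nat} :
  (1 <= i)%N -> (i <= j)%N -> (j <= Lam - 1)%N -> r i <= r j.
Proof.
pose D := [pred n | (1 <= n <= Lam - 1)%N].
have D_convex : {in D &, forall i j k, (i < k < j)%N -> k \in D}.
  move=> m n; rewrite !inE => /andP [m_ge1 _] /andP [_ n_le] k /andP [mk kn].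
  by apply/andP; split; lia.
have D_step : {in D, forall i, i.+1 \in D -> r i <= r i.+1}.
  by move=> n; rewrite !inE => /andP [n_ge1 _] /andP [_ n_le]; exact: hrmono.
move=> i_ge1 i_le j_le; apply: (homo_leq_in (@lexx _ C) (@le_trans _ C)
  D_convex D_step) => //; rewrite inE; apply/andP; split; lia.
Qed.

Lemma radii_bounds (m : nat) :
  (1 <= m)%N -> (m <= Lam - 1)%N -> lo <= r m /\ r m <= hi.
Proof.
move=> m_ge1 m_le; split.
  exact: le_trans hr1 (radii_mono (leqnn 1) m_ge1 m_le).
exact: le_trans (radii_mono m_ge1 m_le (leqnn _)) hrlast.
Qed.

End Radii.

Theorem proposition5p2 (C : numClosedFieldType) (Lam : nat) (q : C)
  (r : nat -> C)
  (hLam : (2 <= Lam)%N)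
  (hq : 1 < `|q - 1|)
  (hr1 : `|t0 q| ^+ 2 <= r 1%N)
  (hrmono : forall i : nat, (1 <= i)%N -> (i.+1 <= Lam - 1)%N -> r i <= r i.+1)
  (hrlast : r (Lam - 1)%N <= `|t0 q|)
  (hrpar : forall s k l : nat, (2 <= s)%N -> (s <= Lam - 1)%N ->
     (1 <= k)%N -> (1 <= l)%N -> (k + l)%N = s ->
     forall te tf : C, inD (r k) te -> inD (r l) tf ->
       `|par q te tf| <= r s) :
  (forall i : nat, (1 <= i)%N -> (i.+1 <= Lam - 1)%N ->
     forall t : C, inS q r i t -> inS q r i.+1 t)
  /\ (forall k l : nat, (1 <= k)%N -> (k <= Lam - 1)%N ->
        (1 <= l)%N -> (l <= Lam - 1)%N ->
        forall t t' : C, inS q r k t -> inS q r l t' ->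
          inS q r (minn k l) (t * t'))
  /\ (forall k l : nat, (1 <= k)%N -> (1 <= l)%N -> (k + l <= Lam - 1)%N ->
        forall t t' : C, inS q r k t -> inS q r l t' ->
          1 + (q - 1) * t * t' != 0 /\ inS q r (k + l)%N (par q t t'))
  /\ ~~ inS q r (Lam - 1)%N 1
  /\ (forall k l : nat, (1 <= k)%N -> (1 <= l)%N -> (k + l)%N = Lam ->
        forall t t' : C, inS q r k t -> inS q r l t' ->
          1 + (q - 1) * t * t' != 0).
Proof.
have bounds := radii_bounds hr1 hrmono hrlast.
have S_le m t : (1 <= m)%N -> (m <= Lam - 1)%N -> inS q r m t -> `|t| <= `|t0 q|.
  by move=> m_ge1 m_le; apply/inS_norm_le/(bounds m m_ge1 m_le).2.
split=> [i i_ge1 i_le t /orP [t_eq | t_in] | ]; first by rewrite /inS t_eq.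
  by apply/orP; right; exact: le_trans t_in (hrmono i i_ge1 i_le).
(* (1): |t t'| <= rho^2 <= r_min(k,l). *)
split=> [k l k_ge1 k_le l_ge1 l_le t t' t_in t'_in | ].
  have [min_lo _] := bounds (minn k l) ltac:(lia) ltac:(lia).
  apply/orP; right; rewrite /inD normrM (le_trans _ min_lo) // expr2.
  by apply: ler_pM => //; [apply: (S_le k) | apply: (S_le l)].
(* (2): t0 absorbs, and on discs the hypothesis on ||_q applies. *)
split=> [k l k_ge1 l_ge1 kl_le t t' t_in t'_in | ].
  have t_le := S_le k t k_ge1 ltac:(lia) t_in.
  have t'_le := S_le l t' l_ge1 ltac:(lia) t'_in.
  split; first exact: par_den_neq0.
  case/orP: t_in => [/eqP -> | t_disc].
    by rewrite (par_t0l (subq_neq0 hq) (sub1_neq0 hq t'_le)) /inS eqxx.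
  case/orP: t'_in => [/eqP -> | t'_disc].
    by rewrite (par_t0r (subq_neq0 hq) (sub1_neq0 hq t_le)) /inS eqxx.
  by apply/orP; right; apply: (hrpar (k + l)%N k l) => //; lia.
(* (3'): |1| = 1 > rho. *)
split.
  apply/negP=> /(S_le (Lam - 1)%N 1 ltac:(lia) (leqnn _)).
  by rewrite normr1 => /(lt_le_trans (norm_t0_lt1 hq)); rewrite ltxx.
(* (4): both factors lie in D(rho). *)
move=> k l k_ge1 l_ge1 kl_eq t t' t_in t'_in.
have k_le : (k <= Lam - 1)%N by lia.
have l_le : (l <= Lam - 1)%N by lia.
exact: (par_den_neq0 hq (S_le k t k_ge1 k_le t_in) (S_le l t' l_ge1 l_le t'_in)).
Qed.
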